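(* Consider a unitary multi-parameter channel $\rho_0\mapsto U(\theta)\rho_0U(\theta)^\dagger$ on $\mathbb{C}^d$, $\theta=(\theta^1,\dots,\theta^m)\in\mathbb{R}^m$, with $U(\theta)$ unitary and differentiable, and fixed pure input $\rho_0=|\psi_0\rangle\langle\psi_0|$. Let $H(\theta)$ be the SLD quantum information matrix of $\rho_{out}(\theta)=U(\theta)\rho_0U(\theta)^\dagger$ and $C_\Upsilon(\theta)_{jk}=4\,\mathrm{Re}\,\mathrm{tr}\{\frac{\partial U}{\partial\theta^j}\rho_0\frac{\partial U}{\partial\theta^k}^\dagger\}$. Then $H(\theta)=C_\Upsilon(\theta)$ if and only if $\mathrm{tr}\{U(\theta)\rho_0\frac{\partial U(\theta)}{\partial\theta^l}^\dagger\}=0$ for all $l$.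
   Context: The SLD quantum information matrix of a family $\rho(\theta)$ is $H(\theta)_{jk}=\mathrm{Re}\,\mathrm{tr}\{\lambda^{(j)}\rho\lambda^{(k)}\}$, where $\lambda^{(j)}$ is a self-adjoint solution of $\partial\rho/\partial\theta^j=\frac12(\rho\lambda^{(j)}+\lambda^{(j)}\rho)$. For a unitary channel the canonical Kraus representation is the single operator $U(\theta)$, and $C_\Upsilon$ is the corresponding multi-parameter Sarovar–Milburn bound. *)

From HB Require Import structures.
From mathcomp Require Import all_boot all_order all_algebra.
From mathcomp Require Import all_classical all_reals all_analysis.
From mathcomp Require Import complex.
Set Implicit Arguments. Unset Strict Implicit. Unset Printing Implicit Defensive.
Import Order.TTheory GRing.Theory Num.Theory.
Import numFieldNormedType.Exports.
Local Open Scope ring_scope.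

Definition adj (R : rcfType) (p q : nat) (A : 'M[R[i]]_(p, q)) : 'M[R[i]]_(q, p) :=
  (map_mx (@conjc R) A)^T.

Definition unitary (R : rcfType) (d : nat) (U : 'M[R[i]]_d) : Prop :=
  adj U *m U = 1%:M /\ U *m adj U = 1%:M.

Definition unit_dir (R : realType) (m : nat) (j : 'I_m) : 'rV[R]_m := delta_mx 0 j.
Arguments unit_dir : clear implicits.
Arguments unit_dir R [m] j.

Definition is_partial (R : realType) (m d : nat) (F : 'rV[R]_m -> 'M[R[i]]_d)
  (j : 'I_m) (theta : 'rV[R]_m) (D : 'M[R[i]]_d) : Prop :=
  forall a b : 'I_d,
    is_derive (0 : R) (1 : R)
      (fun t : R => complex.Re (F (theta + t *: unit_dir R j) a b)) (complex.Re (D a b)) /\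
    is_derive (0 : R) (1 : R)
      (fun t : R => complex.Im (F (theta + t *: unit_dir R j) a b)) (complex.Im (D a b)).

Definition rho_out (R : realType) (m d : nat) (U : 'rV[R]_m -> 'M[R[i]]_d)
  (rho0 : 'M[R[i]]_d) (theta : 'rV[R]_m) : 'M[R[i]]_d :=
  U theta *m rho0 *m adj (U theta).

Definition is_SLD (R : realType) (m d : nat) (rho : 'rV[R]_m -> 'M[R[i]]_d)
  (j : 'I_m) (theta : 'rV[R]_m) (lam : 'M[R[i]]_d) : Prop :=
  adj lam = lam /\
  is_partial rho j theta (2%:R^-1 *: (rho theta *m lam + lam *m rho theta)).

Definition SLD_info (R : realType) (d : nat) (rho : 'M[R[i]]_d)
  (lam1 lam2 : 'M[R[i]]_d) : R :=
  complex.Re (\tr (lam1 *m rho *m lam2)).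

Definition C_Upsilon (R : realType) (d : nat) (rho0 dUj dUk : 'M[R[i]]_d) : R :=
  4%:R * complex.Re (\tr (dUj *m rho0 *m adj dUk)).

(** With [psi = U psi0] and [phi_l = dU_l psi0], the output state is the pure
    state [psi psi^*] and its derivatives are [phi_l psi^* + psi phi_l^*].
    Since the trace of the output state is constant, the overlap
    [a_l = phi_l^* psi] is purely imaginary.  For a pure state the SLD equation
    determines the SLD on [psi]: [lam_l psi = 2 (phi_l + a_l psi)], whence
    [H_jk = C_jk + 4 Re (a_k a_j)].  On the diagonal the correction is
    [-4 |a_l|^2], so [H = C] exactly when all overlaps vanish; finally
    [a_l = tr (U rho0 dU_l^* )]. *)
From HB Require Import structures.
From mathcomp Require Import all_boot all_order all_algebra.
From mathcomp Require Import all_classical all_reals all_analysis.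
From mathcomp Require Import complex.
From mathcomp Require Import ring lra.
Import Order.TTheory GRing.Theory Num.Theory.
Local Open Scope ring_scope.

Section ComplexDerivative.
Context {R : realType} {x : R}.

Definition is_cderive (f : R -> R[i]) (v : R[i]) : Prop :=
  is_derive x (1 : R) (fun t => complex.Re (f t)) (complex.Re v) /\
  is_derive x (1 : R) (fun t => complex.Im (f t)) (complex.Im v).

Lemma is_cderive_cst c : is_cderive (fun=> c) 0.
Proof. by split; apply: is_derive_cst. Qed.

Lemma is_cderiveD f g v w : is_cderive f v -> is_cderive g w ->
  is_cderive (fun t => f t + g t) (v + w).
Proof.
move=> [f1 f2] [g1 g2]; split.
- have -> : (fun t => complex.Re (f t + g t)) =
      (fun t => complex.Re (f t)) + (fun t => complex.Re (g t)).
    by apply: funext => t; rewrite !fctE; case: (f t) => ? ?; case: (g t).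
  by apply: is_derive_eq (is_deriveD f1 g1) _; case: v w {f1 f2 g1 g2} => [? ?] [? ?].
- have -> : (fun t => complex.Im (f t + g t)) =
      (fun t => complex.Im (f t)) + (fun t => complex.Im (g t)).
    by apply: funext => t; rewrite !fctE; case: (f t) => ? ?; case: (g t).
  by apply: is_derive_eq (is_deriveD f2 g2) _; case: v w {f1 f2 g1 g2} => [? ?] [? ?].
Qed.

Lemma is_cderiveM f g v w : is_cderive f v -> is_cderive g w ->
  is_cderive (fun t => f t * g t) (v * g x + f x * w).
Proof.
move=> [f1 f2] [g1 g2]; split.
- have -> : (fun t => complex.Re (f t * g t)) =
      (fun t => complex.Re (f t)) * (fun t => complex.Re (g t)) -
      (fun t => complex.Im (f t)) * (fun t => complex.Im (g t)).
    by apply: funext => t; rewrite !fctE; case: (f t) => ? ?; case: (g t).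
  apply: is_derive_eq (is_deriveB (is_deriveM f1 g1) (is_deriveM f2 g2)) _.
  move: (f x) (g x) v w {f1 f2 g1 g2} => [? ?] [? ?] [? ?] [? ?] /=.
  by rewrite /GRing.scale /=; ring.
- have -> : (fun t => complex.Im (f t * g t)) =
      (fun t => complex.Re (f t)) * (fun t => complex.Im (g t)) +
      (fun t => complex.Im (f t)) * (fun t => complex.Re (g t)).
    by apply: funext => t; rewrite !fctE; case: (f t) => ? ?; case: (g t).
  apply: is_derive_eq (is_deriveD (is_deriveM f1 g2) (is_deriveM f2 g1)) _.
  move: (f x) (g x) v w {f1 f2 g1 g2} => [? ?] [? ?] [? ?] [? ?] /=.
  by rewrite /GRing.scale /=; ring.
Qed.

Lemma is_cderive_conj f v : is_cderive f v ->
  is_cderive (fun t => conjc (f t)) (conjc v).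
Proof.
move=> [f1 f2]; split.
- have -> : (fun t => complex.Re (conjc (f t))) = (fun t => complex.Re (f t)).
    by apply: funext => t; case: (f t).
  by case: v f1 {f2}.
- have -> : (fun t => complex.Im (conjc (f t))) = - (fun t => complex.Im (f t)).
    by apply: funext => t; rewrite !fctE; case: (f t).
  by apply: is_derive_eq (is_deriveN f2) _; case: v {f1 f2}.
Qed.

Lemma is_cderive_unique {f v w} : is_cderive f v -> is_cderive f w -> v = w.
Proof.
move=> [f1 f2] [g1 g2].
move: (@derive_val _ _ _ _ _ _ _ f1) (@derive_val _ _ _ _ _ _ _ f2).
move: (@derive_val _ _ _ _ _ _ _ g1) (@derive_val _ _ _ _ _ _ _ g2).
by case: v w {f1 f2 g1 g2} => [? ?] [? ?] /= -> -> -> ->.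
Qed.

Lemma is_cderive_sum (I : Type) (r : seq I) (F : I -> R -> R[i]) (v : I -> R[i]) :
  (forall k, is_cderive (F k) (v k)) ->
  is_cderive (fun t => \sum_(k <- r) F k t) (\sum_(k <- r) v k).
Proof.
move=> dF; elim: r => [|k r IH].
  by under eq_fun do rewrite big_nil; rewrite big_nil; apply: is_cderive_cst.
by under eq_fun do rewrite big_cons; rewrite big_cons; apply: is_cderiveD.
Qed.

Definition is_mxderive {p q : nat} (F : R -> 'M[R[i]]_(p, q)) (D : 'M[R[i]]_(p, q)) :=
  forall a b, is_cderive (fun t => F t a b) (D a b).

Lemma is_mxderive_cst {p q : nat} (B : 'M[R[i]]_(p, q)) : is_mxderive (fun=> B) 0.
Proof. by move=> a b; rewrite mxE; apply: is_cderive_cst. Qed.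

Lemma is_mxderiveM {p q r : nat}
  {F : R -> 'M[R[i]]_(p, q)} {G : R -> 'M[R[i]]_(q, r)} {D E} :
  is_mxderive F D -> is_mxderive G E ->
  is_mxderive (fun t => F t *m G t) (D *m G x + F x *m E).
Proof.
move=> dF dG a b; under eq_fun do rewrite mxE.
rewrite !mxE -big_split /=.
by apply: is_cderive_sum => c; apply: is_cderiveM.
Qed.

Lemma is_mxderive_adj {p q : nat} {F : R -> 'M[R[i]]_(p, q)} {D} :
  is_mxderive F D -> is_mxderive (fun t => adj (F t)) (adj D).
Proof.
move=> dF a b; under eq_fun do rewrite !mxE.
by rewrite !mxE; apply: is_cderive_conj.
Qed.

Lemma is_cderive_trace {p : nat} {F : R -> 'M[R[i]]_p} {D} :
  is_mxderive F D -> is_cderive (fun t => \tr (F t)) (\tr D).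
Proof. by move=> dF; apply: is_cderive_sum => c; apply: dF. Qed.

Lemma is_mxderive_unique {p q : nat} {F : R -> 'M[R[i]]_(p, q)} {D E} :
  is_mxderive F D -> is_mxderive F E -> D = E.
Proof.
by move=> dD dE; apply/matrixP => a b; apply: is_cderive_unique (dD a b) (dE a b).
Qed.

End ComplexDerivative.
Arguments is_cderive {R} x f v.
Arguments is_mxderive {R} x {p q} F D.

Section Adjoint.
Context {R : rcfType}.

Lemma adjM {p q r : nat} (A : 'M[R[i]]_(p, q)) (B : 'M[R[i]]_(q, r)) :
  adj (A *m B) = adj B *m adj A.
Proof. by rewrite /adj map_mxM trmx_mul. Qed.

Lemma adjK {p q : nat} (A : 'M[R[i]]_(p, q)) : adj (adj A) = A.
Proof. by apply/matrixP => a b; rewrite /adj !mxE conjcK. Qed.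

Lemma adjD {p q : nat} (A B : 'M[R[i]]_(p, q)) : adj (A + B) = adj A + adj B.
Proof. by apply/matrixP => a b; rewrite /adj !mxE rmorphD. Qed.

Lemma adjZ {p q : nat} (c : R[i]) (A : 'M[R[i]]_(p, q)) : adj (c *: A) = conjc c *: adj A.
Proof. by apply/matrixP => a b; rewrite /adj !mxE rmorphM. Qed.

Lemma Re_add (x y : R[i]) : complex.Re (x + y) = complex.Re x + complex.Re y.
Proof. by case: x; case: y. Qed.

Lemma Re_natrM (n : nat) (z : R[i]) : complex.Re (n%:R * z) = n%:R * complex.Re z.
Proof.
have -> : (n%:R : R[i]) = real_complex R (n%:R : R) by rewrite rmorph_nat.
by case: z => a b /=; rewrite mul0r subr0.
Qed.

Lemma imaginary_Re_sqr_eq0 {z : R[i]} :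
  conjc z + z = 0 -> complex.Re (z * z) = 0 -> z = 0.
Proof.
case: z => x y /= [] Re0 _ Resqr0; have x0 : x = 0 by lra.
subst x; have /eqP : y * y = 0 by lra.
by rewrite mulf_eq0 orbb => /eqP ->.
Qed.

Lemma trace_mx11_eq0 (A : 'M[R[i]]_1) : \tr A = 0 -> A = 0.
Proof. by move=> trA0; rewrite (mx11_scalar A) -trace_mx11 trA0 raddf0. Qed.

End Adjoint.

Section PureStateSLD.
Context {R : rcfType} {d : nat} {psi : 'cV[R[i]]_d}.
Hypothesis psi_normed : adj psi *m psi = 1%:M.

Lemma pure_SLD_mul_state {phi : 'cV[R[i]]_d} {lam : 'M[R[i]]_d} :
  adj psi *m phi = - (adj phi *m psi) ->
  phi *m adj psi + psi *m adj phi =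
    2%:R^-1 *: (psi *m adj psi *m lam + lam *m (psi *m adj psi)) ->
  lam *m psi = 2%:R *: (phi + psi *m (adj phi *m psi)).
Proof.
move=> skew SLDeq.
have two_neq0 : (2%:R : R[i]) != 0 by rewrite pnatr_eq0.
have Dpsi : (phi *m adj psi + psi *m adj phi) *m psi = phi + psi *m (adj phi *m psi).
  by rewrite mulmxDl -!mulmxA psi_normed mulmx1.
have Dpsi' : (phi *m adj psi + psi *m adj phi) *m psi =
    2%:R^-1 *: (psi *m (adj psi *m (lam *m psi)) + lam *m psi).
  by rewrite SLDeq -scalemxAl mulmxDl -!mulmxA psi_normed mulmx1.
(* Sandwiching the derivative between [psi^*] and [psi] gives [0] by skewness
   and [psi^* lam psi] by the SLD equation. *)
have lam_diag0 : adj psi *m (lam *m psi) = 0.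
  have := congr1 (mulmx (adj psi)) Dpsi'.
  rewrite Dpsi mulmxDr (mulmxA (adj psi) psi) psi_normed mul1mx skew addNr.
  rewrite -scalemxAr mulmxDr (mulmxA (adj psi) psi) psi_normed mul1mx.
  by rewrite -mulr2n -scalerMnr scalerMnl -mulr_natr mulVf // scale1r.
by rewrite -Dpsi Dpsi' lam_diag0 mulmx0 add0r scalerA divff ?scale1r.
Qed.

Lemma pure_SLD_info {phij phik : 'cV[R[i]]_d} {lamj lamk : 'M[R[i]]_d} :
  adj psi *m phij = - (adj phij *m psi) ->
  adj psi *m phik = - (adj phik *m psi) ->
  adj lamk = lamk ->
  lamj *m psi = 2%:R *: (phij + psi *m (adj phij *m psi)) ->
  lamk *m psi = 2%:R *: (phik + psi *m (adj phik *m psi)) ->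
  \tr (lamj *m (psi *m adj psi) *m lamk) =
    4%:R * (\tr (adj phik *m phij) + \tr (adj phik *m psi *m (adj phij *m psi))).
Proof.
move=> skewj skewk lamk_sa lamj_psi lamk_psi.
rewrite (mulmxA lamj psi) -(mulmxA (lamj *m psi)) mxtrace_mulC -{1}lamk_sa -adjM.
rewrite lamk_psi lamj_psi adjZ conjc_nat adjD !adjM adjK skewk.
rewrite -scalemxAl -scalemxAr scalerA mxtraceZ -natrM.
set aj := adj phij *m psi; set ak := adj phik *m psi.
have -> : (adj phik + (- ak) *m adj psi) *m (phij + psi *m aj) =
    adj phik *m phij + ak *m aj.
  rewrite mulmxDl !mulmxDr -!mulmxA skewj (mulmxA (adj psi)) psi_normed mul1mx.
  by rewrite mulmxN !mulNmx opprK subrr addr0.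
by rewrite mxtraceD.
Qed.

End PureStateSLD.

Section UnitaryChannel.
Context {R : realType} {m d : nat} {U : 'rV[R]_m -> 'M[R[i]]_d}
  {dU : 'I_m -> 'M[R[i]]_d} {psi0 : 'cV[R[i]]_d} {theta : 'rV[R]_m}.
Hypothesis U_unitary : forall th, unitary (U th).
Hypothesis dU_partial : forall l, is_partial U l theta (dU l).
Hypothesis psi0_normed : adj psi0 *m psi0 = 1%:M.

Lemma is_partial_rho_out (rho : 'M[R[i]]_d) l :
  is_partial (rho_out U rho) l theta
    (dU l *m rho *m adj (U theta) + U theta *m rho *m adj (dU l)).
Proof.
have dUl : is_mxderive 0 (fun t => U (theta + t *: unit_dir R l)) (dU l).
  exact: dU_partial.
have := is_mxderiveM (is_mxderiveM dUl (is_mxderive_cst rho)) (is_mxderive_adj dUl).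
by rewrite scale0r addr0 mulmx0 addr0.
Qed.

Lemma trace_partial_rho_out (rho : 'M[R[i]]_d) l :
  \tr (dU l *m rho *m adj (U theta) + U theta *m rho *m adj (dU l)) = 0.
Proof.
apply: is_cderive_unique (is_cderive_trace (is_partial_rho_out rho l)) _.
have tr_const t : \tr (rho_out U rho (theta + t *: unit_dir R l)) = \tr rho.
  by rewrite /rho_out mxtrace_mulC mulmxA (proj1 (U_unitary _)) mul1mx.
by under eq_fun do rewrite tr_const; apply: is_cderive_cst.
Qed.

Local Notation rho0 := (psi0 *m adj psi0).
Local Notation psi := (U theta *m psi0).
Local Notation phi l := (dU l *m psi0).
Local Notation overlap l := ((adj (phi l) *m psi) 0 0).

Lemma psi_normed : adj psi *m psi = 1%:M.
Proof.
by rewrite adjM mulmxA -(mulmxA (adj psi0)) (proj1 (U_unitary theta)) mulmx1.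
Qed.

Lemma rho_out_pure : rho_out U rho0 theta = psi *m adj psi.
Proof. by rewrite /rho_out adjM !mulmxA. Qed.

Lemma partial_rho_out_pure l :
  dU l *m rho0 *m adj (U theta) + U theta *m rho0 *m adj (dU l) =
  phi l *m adj psi + psi *m adj (phi l).
Proof. by rewrite !adjM !mulmxA. Qed.

Lemma overlap_skew l : adj psi *m phi l = - (adj (phi l) *m psi).
Proof.
apply/eqP; rewrite -addr_eq0; apply/eqP/trace_mx11_eq0.
rewrite mxtraceD mxtrace_mulC (mxtrace_mulC (adj (phi l))) -mxtraceD.
by rewrite -partial_rho_out_pure trace_partial_rho_out.
Qed.

Lemma overlap_imaginary l : conjc (overlap l) + overlap l = 0.
Proof.
have /matrixP/(_ 0 0) := overlap_skew l.
by rewrite -{1}(adjK (phi l)) -adjM /adj !mxE => ->; rewrite addNr.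
Qed.

Lemma trace_U_rho0_adj_dU l : \tr (U theta *m rho0 *m adj (dU l)) = overlap l.
Proof. by rewrite mulmxA -(mulmxA psi) mxtrace_mulC -adjM trace_mx11. Qed.

Lemma SLD_mul_psi {l lam} : is_SLD (rho_out U rho0) l theta lam ->
  lam *m psi = 2%:R *: (phi l + psi *m (adj (phi l) *m psi)).
Proof.
move=> [_ SLDeq]; apply: (pure_SLD_mul_state psi_normed (overlap_skew l)).
rewrite -rho_out_pure -partial_rho_out_pure.
exact: is_mxderive_unique (is_partial_rho_out rho0 l) SLDeq.
Qed.

Lemma SLD_info_decomp {j k lamj lamk} :
  is_SLD (rho_out U rho0) j theta lamj -> is_SLD (rho_out U rho0) k theta lamk ->
  SLD_info (rho_out U rho0 theta) lamj lamk =
    C_Upsilon rho0 (dU j) (dU k) + 4%:R * complex.Re (overlap k * overlap j).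
Proof.
move=> SLDj SLDk; rewrite /SLD_info rho_out_pure.
rewrite (pure_SLD_info psi_normed (overlap_skew j) (overlap_skew k) SLDk.1
  (SLD_mul_psi SLDj) (SLD_mul_psi SLDk)).
rewrite Re_natrM Re_add mulrDr /C_Upsilon; congr (_ * complex.Re _ + _).
  by rewrite mxtrace_mulC !adjM !mulmxA.
by rewrite trace_mx11 mxE big_ord1.
Qed.

End UnitaryChannel.

Theorem lemma10 (R : realType) (m d : nat)
  (U : 'rV[R]_m -> 'M[R[i]]_d) (dU : 'I_m -> 'M[R[i]]_d)
  (psi0 : 'cV[R[i]]_d) (theta : 'rV[R]_m)
  (lam : 'I_m -> 'M[R[i]]_d) :
  (forall th, unitary (U th)) ->
  (forall l, is_partial U l theta (dU l)) ->
  adj psi0 *m psi0 = 1%:M ->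
  (forall j, is_SLD (rho_out U (psi0 *m adj psi0)) j theta (lam j)) ->
  ((forall j k : 'I_m,
      SLD_info (rho_out U (psi0 *m adj psi0) theta) (lam j) (lam k)
      = C_Upsilon (psi0 *m adj psi0) (dU j) (dU k))
   <->
   (forall l : 'I_m, \tr (U theta *m (psi0 *m adj psi0) *m adj (dU l)) = 0)).
Proof.
move=> U_unitary dU_partial psi0_normed lam_SLD.
have decomp j k :=
  SLD_info_decomp U_unitary dU_partial psi0_normed (lam_SLD j) (lam_SLD k).
split=> [H_eq_C l | trace0 j k].
- rewrite trace_U_rho0_adj_dU.
  apply: (imaginary_Re_sqr_eq0 (overlap_imaginary U_unitary dU_partial l)).
  have /eqP := decomp l l; rewrite H_eq_C -subr_eq0 opprD addrA subrr sub0r oppr_eq0.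
  by rewrite mulf_eq0 pnatr_eq0 => /eqP.
- by rewrite decomp -(trace_U_rho0_adj_dU k) trace0 mul0r mulr0 addr0.
Qed.
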